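(* For every constant-time one-sided error PACA $C$ there is a constant-time DACA $C'$ such that $L(C)=L(C')$.
   Context: A (bounded, one-dimensional) cellular automaton has a finite state set $Q$, a boundary symbol $\$\notin Q$, and a local transition function $\delta\colon Q_\$\times Q\times Q_\$\to Q$ ($Q_\$=Q\cup\{\$\}$); on $s=s_0\cdots s_{n-1}\in Q^n$, $\Delta(s)=\delta(\$,s_0,s_1)\,\delta(s_0,s_1,s_2)\cdots\delta(s_{n-2},s_{n-1},\$)$. A DACA is such a CA with input alphabet $\Sigma\subseteq Q$ and accepting states $A\subseteq Q$; it accepts $x\in\Sigma^+$ of length $n$ iff $\Delta^t(x)\in A^n$ for some $t\ge0$; it has time complexity $T$ if every accepted $x$ of length $n$ has such a $t<T(n)$. A PACA is the same except it has two local transition functions $\delta_0,\delta_1$ and at each step each cell independently tosses a fair coin $c$ and updates by $\delta_c$; a computation is accepting if at some step all cells are in $A$; it has time complexity $T$ if every accepting computation on an input of length $n$ first reaches $A^n$ at a step $<T(n)$. A one-sided error PACA for $L$ accepts every $x\in L$ with probability $\ge1/2$ and every $x\notin L$ with probability $0$; $L(C)=L$. Constant-time means time complexity bounded by a constant. *)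

From mathcomp Require Import all_boot all_order all_algebra.
Set Implicit Arguments. Unset Strict Implicit. Unset Printing Implicit Defensive.
Import Order.TTheory GRing.Theory Num.Theory.

(* The boundary symbol $ is [None]; Q_$ = option Q. *)

(* Synchronous update of a configuration [s]; cell i is updated by
   [f i (left neighbour) (own state) (right neighbour)]. *)
Definition local_step (Q : Type) (f : nat -> option Q -> Q -> option Q -> Q)
    (s : seq Q) : seq Q :=
  [seq f p.1.1.1 p.1.1.2 p.1.2 p.2
  | p <- zip (zip (zip (iota 0 (size s)) (None :: map Some s)) s)
             (rcons (map Some (behead s)) None)].

(* Deterministic CA acceptor.  The input alphabet Sigma is a subset of the
   state set, given by an injective embedding. *)
Record DACA (Sigma : finType) := {
  dQ : finType;
  dinput : Sigma -> dQ;
  dinput_inj : injective dinput;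
  ddelta : option dQ -> dQ -> option dQ -> dQ;
  dacc : pred dQ }.

Definition daca_Delta Sigma (C : DACA Sigma) : seq (dQ C) -> seq (dQ C) :=
  local_step (fun _ => @ddelta _ C).

Definition daca_conf Sigma (C : DACA Sigma) (x : seq Sigma) (t : nat) :=
  iter t (@daca_Delta _ C) (map (@dinput _ C) x).

Definition daca_acc_at Sigma (C : DACA Sigma) (x : seq Sigma) (t : nat) : bool :=
  all (@dacc _ C) (daca_conf C x t).

Definition daca_accepts Sigma (C : DACA Sigma) (x : seq Sigma) : Prop :=
  0 < size x /\ exists t, daca_acc_at C x t.

Definition daca_const_time Sigma (C : DACA Sigma) : Prop :=
  exists T : nat, forall x : seq Sigma, daca_accepts C x ->
    exists t, t < T /\ daca_acc_at C x t.

(* Probabilistic CA acceptor: two local rules; a cell whose coin is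
   [false] (0) uses pdelta0, [true] (1) uses pdelta1. *)
Record PACA (Sigma : finType) := {
  pQ : finType;
  pinput : Sigma -> pQ;
  pinput_inj : injective pinput;
  pdelta0 : option pQ -> pQ -> option pQ -> pQ;
  pdelta1 : option pQ -> pQ -> option pQ -> pQ;
  pacc : pred pQ }.

Definition paca_step Sigma (C : PACA Sigma) (c : nat -> bool)
    : seq (pQ C) -> seq (pQ C) :=
  local_step (fun i => if c i then @pdelta1 _ C else @pdelta0 _ C).

(* A computation is determined by the coin outcomes [coins t i] of cell i
   at step t; configuration after t steps. *)
Fixpoint paca_conf Sigma (C : PACA Sigma) (x : seq Sigma)
    (coins : nat -> nat -> bool) (t : nat) : seq (pQ C) :=
  match t with
  | 0 => map (@pinput _ C) x
  | t'.+1 => @paca_step _ C (coins t') (paca_conf C x coins t')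
  end.

Definition paca_acc_at Sigma (C : PACA Sigma) (x : seq Sigma)
    (coins : nat -> nat -> bool) (t : nat) : bool :=
  all (@pacc _ C) (paca_conf C x coins t).

Definition paca_const_time Sigma (C : PACA Sigma) : Prop :=
  exists T : nat, forall (x : seq Sigma) (coins : nat -> nat -> bool) (t : nat),
    0 < size x -> paca_acc_at C x coins t ->
    (forall s, s < t -> ~~ paca_acc_at C x coins s) -> t < T.

Definition coins_of (t n : nat) (w : {ffun 'I_t * 'I_n -> bool})
    : nat -> nat -> bool :=
  fun s i => match @insub _ (fun k => k < t) 'I_t s,
                   @insub _ (fun k => k < n) 'I_n i with
             | Some s', Some i' => w (s', i')
             | _, _ => false
             end.

(* Probability that the computation accepts within t steps
   (i.e. reaches A^n at some step s <= t); only coins of steps < t matter. *)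
Definition paca_prob_within Sigma (C : PACA Sigma) (x : seq Sigma) (t : nat)
    : rat :=
  (#|[set w : {ffun 'I_t * 'I_(size x) -> bool} |
      [exists s : 'I_t.+1, paca_acc_at C x (coins_of w) s]]|%:R
   / #|{: {ffun 'I_t * 'I_(size x) -> bool}}|%:R)%R.

(* The acceptance probability is the supremum over t of paca_prob_within
   (continuity from below of the coin-sequence measure).
   "Pr >= 1/2" : every r < 1/2 is exceeded by some paca_prob_within;
   "Pr = 0"    : all paca_prob_within vanish. *)
Definition one_sided_for Sigma (C : PACA Sigma) (L : seq Sigma -> Prop) : Prop :=
  forall x : seq Sigma, 0 < size x ->
    (L x -> forall r : rat, (r < 1 / 2)%R ->
              exists t, (r < paca_prob_within C x t)%R) /\
    (~ L x -> forall t, paca_prob_within C x t = 0%R).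

(* Every accepting run of the PACA first accepts before step T, and the
   state of a cell at step s <= T depends only on the input within distance s
   and on at most 2T^2 coins in its light cone.  Call a cell fallible if some
   coin choice makes it rejecting; it then rejects with probability at least
   2^(-2T^2), independently for cells more than 2T apart.  Call a window of
   radius R around a cell good at step s if it does not contain many such
   independent fallible cells and its fallible cells can all be made accepting
   simultaneously.  If for every s < T some window is bad, the acceptance
   probability is below 1/4, so x is not in L.  If at some step s every window
   is good, the absence of many spread-out fallible cells leaves gaps of 2T
   harmless cells, across which the local accepting coin choices can be glued
   into one accepting run, so x is in L by one-sided error.  Goodness of the
   window around a cell depends only on the input within distance R + T, which
   a deterministic automaton collects and inspects in constant time. *)

From mathcomp Require Import all_boot all_order all_algebra.
From mathcomp Require Import zify ring lra.
From mathcomp Require Import boolp.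
From Stdlib Require Import Classical.
Set Implicit Arguments. Unset Strict Implicit. Unset Printing Implicit Defensive.
Import Order.TTheory GRing.Theory Num.Theory.

Section IndependentEvents.
Variable X : finType.

Definition splice (D : pred X) (u v : {ffun X -> bool}) : {ffun X -> bool} :=
  [ffun x => if D x then u x else v x].

Lemma card_predI_indep (D : pred X) (P Q : pred {ffun X -> bool}) :
  (forall w1 w2 : {ffun X -> bool}, (forall x, D x -> w1 x = w2 x) -> P w1 = P w2) ->
  (forall w1 w2 : {ffun X -> bool}, (forall x, ~~ D x -> w1 x = w2 x) -> Q w1 = Q w2) ->
  #|[pred w | P w && Q w]| * #|{: {ffun X -> bool}}| = #|P| * #|Q|.
Proof.
move=> HP HQ.
pose swap (p : {ffun X -> bool} * {ffun X -> bool}) :=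
  (splice D p.1 p.2, splice D p.2 p.1).
have swapK : involutive swap.
  by move=> [u v]; congr pair; apply/ffunP => x; rewrite !ffunE; case: (D x).
have -> : #|P| * #|Q| = #|setX [set w in P] [set w in Q]| by rewrite cardsX !cardsE.
have -> : setX [set w in P] [set w in Q] =
          swap @^-1: setX [set w in [pred w | P w && Q w]] setT.
  apply/setP => [[u v]]; rewrite !inE /=.
  have -> : P (splice D u v) = P u by apply: HP => x hx; rewrite ffunE hx.
  have -> : Q (splice D u v) = Q v by apply: HQ => x hx; rewrite ffunE (negbTE hx).
  by rewrite andbT.
by rewrite card_preimset ?cardsX ?cardsE ?cardsT //; exact: inv_inj.
Qed.

Lemma card_ffun_leq_event (D : {set X}) (F : pred {ffun X -> bool}) w0 :
  (forall w1 w2 : {ffun X -> bool}, (forall x, x \in D -> w1 x = w2 x) -> F w1 = F w2) -> F w0 ->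
  #|{: {ffun X -> bool}}| <= #|F| * 2 ^ #|D|.
Proof.
move=> HF F0.
pose agree0 := [pred w : {ffun X -> bool} | [forall x, (x \notin D) ==> (w x == w0 x)]].
have Hagree : forall w1 w2 : {ffun X -> bool}, (forall x, ~~ (x \in D) -> w1 x = w2 x) ->
    agree0 w1 = agree0 w2.
  move=> w1 w2 h; apply/forallP/forallP => hh x; have := hh x;
  by case hx: (x \in D) => //=; rewrite h ?hx.
have Hindep := @card_predI_indep (fun x => x \in D) F agree0 HF Hagree.
have FI_gt0 : 0 < #|[pred w | F w && agree0 w]|.
  apply/card_gt0P; exists w0; rewrite inE /= F0 /=; apply/forallP => x; exact/implyP.
have agree_le : #|agree0| <= 2 ^ #|D|.
  rewrite -card_powerset.
  have -> : #|agree0| = #|[set [set x in D | w x] | w : {ffun X -> bool} in agree0]|.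
    rewrite card_in_imset // => w1 w2 q1 q2 e; apply/ffunP => x.
    case hx: (x \in D); first by move/setP: e => /(_ x); rewrite !inE hx.
    move/forallP: q1 => /(_ x); move/forallP: q2 => /(_ x).
    by rewrite hx /= => /eqP -> /eqP ->.
  apply: subset_leq_card; apply/subsetP => A /imsetP [w _ ->].
  by rewrite inE; apply/subsetP => x; rewrite inE => /andP [].
apply: (@leq_trans (#|[pred w | F w && agree0 w]| * #|{: {ffun X -> bool}}|)).
  exact: leq_pmull.
by rewrite Hindep leq_mul2l agree_le orbT.
Qed.

End IndependentEvents.

Lemma card_leq_sum_cover (T : finType) m (P : nat -> pred T) (E : pred T) :
  (forall w, E w -> exists2 s, s < m & P s w) -> #|E| <= \sum_(s < m) #|P s|.
Proof.
elim: m E => [|m IH] E H.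
  rewrite big_ord0 leqn0; apply/eqP/eq_card0 => w; apply/negP => /H [s]; lia.
rewrite big_ord_recr /=.
apply: (@leq_trans #|[predU [pred w | E w && ~~ P m w] & P m]|).
  apply: subset_leq_card; apply/subsetP => w hw; rewrite !inE /=.
  have hw' : E w := hw; rewrite (_ : (w \in P m) = P m w) // hw'.
  by case: (P m w).
apply: leq_trans (leq_addr #|[predI [pred w | E w && ~~ P m w] & P m]| _) _.
rewrite cardUI leq_add2r; apply: IH => w /andP [/H [s hs Ps] nP].
exists s => //; move: hs; rewrite ltnS leq_eqVlt => /orP [/eqP e|//].
by move: nP; rewrite -e Ps.
Qed.

Lemma nat_finite_choice (A : Type) (a0 : A) (P : nat -> A -> Prop) m :
  (forall j, j < m -> exists y, P j y) -> exists e : nat -> A, forall j, j < m -> P j (e j).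
Proof.
elim: m => [|m IH] H; first by exists (fun _ => a0).
have [e he] := IH (fun j hj => H j (ltnW hj)); have [y hy] := H m (ltnSn m).
exists (fun j => if j == m then y else e j) => j hj.
by case: eqP => [->//|hne]; apply: he; lia.
Qed.

Lemma card_ord_interval n (A : {pred 'I_n}) lo m :
  (forall k, k \in A -> lo <= k < lo + m) -> #|A| <= m.
Proof.
move=> H; rewrite cardE -(size_map val) -[m](size_iota lo).
apply: uniq_leq_size; first by rewrite map_inj_uniq ?enum_uniq //; exact: val_inj.
by move=> y /mapP [k]; rewrite mem_enum => /H hk ->; rewrite mem_iota.
Qed.

Lemma expnS_bernoulli b m : b ^ m * (b + 1 + m) <= (b + 1) ^ m.+1.
Proof.
elim: m => [|m IH]; first by rewrite expn0 expn1 mul1n addn0.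
rewrite expnS [(b + 1) ^ m.+2]expnS.
move: IH; set P := b ^ m; set Qp := (b + 1) ^ m.+1 => IH.
have := leq_mul IH (leqnn (b + 1)); nia.
Qed.

Lemma expn_pred_mul_leq a k : 0 < a -> (a - 1) ^ (a * k) * k.+1 <= a ^ (a * k).
Proof.
move=> a_gt0; have := expnS_bernoulli (a - 1) (a * k); rewrite subnK // expnS.
have -> : a + a * k = a * k.+1 by rewrite mulnS.
by move=> h; rewrite -(leq_pmul2l a_gt0) mulnCA.
Qed.

Lemma size_local_step Q (f : nat -> option Q -> Q -> option Q -> Q) s :
  size (local_step f s) = size s.
Proof.
rewrite /local_step size_map !size_zip size_iota /= size_map size_rcons size_map.
by rewrite size_behead; case: s => [|a s] //=; lia.
Qed.

Lemma nth_zip_lt (S T : Type) (p : S * T) (s : seq S) (t : seq T) i :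
  i < size s -> i < size t -> nth p (zip s t) i = (nth p.1 s i, nth p.2 t i).
Proof. by move=> h1 h2; rewrite nth_zip_cond size_zip leq_min h1 h2. Qed.

Lemma nth_local_step Q (f : nat -> option Q -> Q -> option Q -> Q) s d i :
  i < size s ->
  nth d (local_step f s) i =
  f i (if i is j.+1 then Some (nth d s j) else None) (nth d s i)
      (if i.+1 < size s then Some (nth d s i.+1) else None).
Proof.
move=> hi.
have e1 : size (None :: map Some s) = (size s).+1 by rewrite /= size_map.
have e2 : size (rcons (map Some (behead s)) None) = (size s).-1.+1.
  by rewrite size_rcons size_map size_behead.
have hz : i < size (zip (zip (zip (iota 0 (size s)) (None :: map Some s)) s)
             (rcons (map Some (behead s)) None)).
  by rewrite !size_zip size_iota e1 e2; lia.
rewrite /local_step (nth_map (0, None, d, None)) //.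
rewrite nth_zip_lt; last (by rewrite e2; lia); last by rewrite !size_zip size_iota e1; lia.
rewrite nth_zip_lt //; last by rewrite !size_zip size_iota e1; lia.
rewrite nth_zip_lt ?size_iota ?e1 //; last by lia.
rewrite /= nth_iota // add0n; congr f.
- by case: i hi {hz} => [|j] //= hj; rewrite (nth_map d) //; lia.
- rewrite nth_rcons size_map size_behead.
  case: (ltnP i (size s).-1) => h3.
    rewrite (nth_map d) ?size_behead // nth_behead.
    by have -> : i.+1 < size s by lia.
  have -> : (i.+1 < size s) = false by lia.
  by have -> : i == (size s).-1 by lia.
Qed.

Local Open Scope ring_scope.

Section SpaceTime.
Variables (Sigma : finType) (C : PACA Sigma).

(* The run of [C] on a bi-infinite tape [inp], where [None] is a blank cell
   that stays blank and plays the role of the boundary symbol; [c s z] is the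
   coin of cell [z] at step [s]. *)
Fixpoint cell_state (inp : int -> option Sigma) (c : nat -> int -> bool)
    (s : nat) (z : int) : option (pQ C) :=
  match s with
  | 0%N => omap (@pinput _ C) (inp z)
  | s'.+1 =>
      if cell_state inp c s' z is Some q then
        Some ((if c s' z then @pdelta1 _ C else @pdelta0 _ C)
                (cell_state inp c s' (z - 1)) q (cell_state inp c s' (z + 1)))
      else None
  end.

Lemma cell_state_eqNone inp c s z : (cell_state inp c s z == None) = (inp z == None).
Proof.
elim: s z => [|s IH] z /=; first by case: (inp z).
by case: (cell_state inp c s z) (IH z) => [q|] /= <-.
Qed.

Lemma eq_cell_state_coins inp c c' s z :
  (forall u y, (u < s)%N -> inp y != None -> z - s%:Z < y -> y < z + s%:Z ->
     c u y = c' u y) ->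
  cell_state inp c s z = cell_state inp c' s z.
Proof.
elim: s z => [|s IH] z H //=.
rewrite -IH; last by move=> u y hu hy h1 h2; apply: H => //; lia.
case E: (cell_state inp c s z) => [q|] //.
have hz : inp z != None by rewrite -(cell_state_eqNone inp c s) E.
rewrite (H s z) //; try lia.
rewrite (IH (z - 1)); last by move=> u y hu hy h1 h2; apply: H => //; lia.
by rewrite (IH (z + 1)) //; move=> u y hu hy h1 h2; apply: H => //; lia.
Qed.

Lemma eq_cell_state_tape inp inp' c s z :
  (forall y, z - s%:Z <= y -> y <= z + s%:Z -> inp y = inp' y) ->
  cell_state inp c s z = cell_state inp' c s z.
Proof.
elim: s z => [|s IH] z H /=; first by rewrite H; [|lia|lia].
rewrite -IH; last by move=> y h1 h2; apply: H; lia.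
case: (cell_state inp c s z) => [q|] //.
rewrite (IH (z - 1)); last by move=> y h1 h2; apply: H; lia.
by rewrite (IH (z + 1)) //; move=> y h1 h2; apply: H; lia.
Qed.

Lemma cell_state_shift inp c s z a :
  cell_state (fun y => inp (y + a)) c s z =
  cell_state inp (fun u y => c u (y - a)) s (z + a).
Proof.
elim: s z => [|s IH] z //=.
rewrite IH; case: (cell_state inp _ s (z + a)) => [q|] //.
rewrite addrK !IH.
have -> : z - 1 + a = z + a - 1 by lia.
by have -> : z + 1 + a = z + a + 1 by lia.
Qed.

Definition tape (x : seq Sigma) (z : int) : option Sigma :=
  if 0 <= z then nth None (map Some x) `|z|%N else None.

Lemma tape_neqNone x y : tape x y != None -> 0 <= y /\ (`|y| < size x)%N.
Proof.
rewrite /tape; case: ifP => // h1 h2; split => //.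
by move: h2; apply: contraNT; rewrite -leqNgt => h; rewrite nth_default // size_map.
Qed.

Lemma tape_nth x (k : nat) a : (k < size x)%N -> tape x (Posz k) = Some (nth a x k).
Proof. by move=> hk; rewrite /tape /= (nth_map a). Qed.

Lemma tape_lt_neqNone x (k : nat) : (k < size x)%N -> tape x (Posz k) != None.
Proof. by case: x => // a x' hk; rewrite (tape_nth a). Qed.

Lemma tape_out x (z : int) : z < 0 \/ Posz (size x) <= z -> tape x z = None.
Proof.
rewrite /tape; case: ifP => // h [h1|h1]; first by lia.
by rewrite nth_default // size_map; lia.
Qed.

Lemma size_paca_conf x coins s : size (paca_conf C x coins s) = size x.
Proof.
elim: s => [|s IH] /=; first by rewrite size_map.
by rewrite /paca_step size_local_step.
Qed.

Lemma paca_conf_cell_state x (coins : nat -> nat -> bool) (c : nat -> int -> bool) d :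
  (forall u k, c u (Posz k) = coins u k) ->
  forall s k, (k < size x)%N ->
    cell_state (tape x) c s (Posz k) = Some (nth d (paca_conf C x coins s) k).
Proof.
move=> Hc; elim=> [|s IH] k hk /=.
  by case: x hk => // a x' hk; rewrite (tape_nth a) // (nth_map a).
rewrite /paca_step nth_local_step ?size_paca_conf // IH // Hc ?size_paca_conf.
have -> : cell_state (tape x) c s (Posz k - 1) =
          (if k is j.+1 then Some (nth d (paca_conf C x coins s) j) else None).
  case: k hk => [|j] hj; first by apply/eqP; rewrite cell_state_eqNone tape_out //; lia.
  have -> : Posz j.+1 - 1 = Posz j by lia.
  by rewrite IH //; lia.
have -> : cell_state (tape x) c s (Posz k + 1) =
          (if (k.+1 < size x)%N then Some (nth d (paca_conf C x coins s) k.+1) else None).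
  have -> : Posz k + 1 = Posz k.+1 by lia.
  case: ifP => h; first by rewrite IH.
  by apply/eqP; rewrite cell_state_eqNone tape_out //; right; lia.
by [].
Qed.

End SpaceTime.

Section GoodWindows.
Variables (Sigma : finType) (C : PACA Sigma) (T : nat).

(* A cell at step [s <= T] depends on at most [cone_size T] coins, so a cell
   that can reject does so with probability at least [1 / fail_denom T]; then
   [spread_len T] such cells with disjoint cones all accept with probability at
   most [1 / (4 T + 1)], and a window of radius [good_radius T] without them
   has a gap of [2 T] cells that cannot reject. *)
Definition cone_size : nat := (T * (2 * T))%N.
Definition fail_denom : nat := (2 ^ cone_size)%N.
Definition spread_len : nat := (fail_denom * (4 * T))%N.
Definition good_radius : nat := (4 * T * spread_len)%N.
Definition view_radius : nat := (good_radius + T)%N.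

Definition accepting_cell inp c s z : bool :=
  if cell_state C inp c s z is Some q then @pacc _ C q else true.

Definition fallible inp s z : Prop := exists c, ~~ accepting_cell inp c s z.

Definition satisfiable inp s (lo hi : int) : Prop :=
  exists c, forall z, lo <= z -> z <= hi -> fallible inp s z -> accepting_cell inp c s z.

Definition spread inp s (lo hi : int) : Prop :=
  exists e : nat -> int,
    (forall j, (j < spread_len)%N -> [/\ lo <= e j, e j <= hi & fallible inp s (e j)]) /\
    (forall j, (j.+1 < spread_len)%N -> e j + (2 * T)%N%:Z <= e j.+1).

Definition good inp s (z0 : int) : Prop :=
  ~ spread inp s (z0 - good_radius%:Z) (z0 + good_radius%:Z) /\
  satisfiable inp s (z0 - good_radius%:Z) (z0 + good_radius%:Z).

Lemma fallible_tape inp s z : fallible inp s z -> inp z != None.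
Proof.
move=> [c]; apply: contraNneq => h.
by rewrite /accepting_cell; have /eqP -> : cell_state C inp c s z == None
  by rewrite cell_state_eqNone h.
Qed.

Lemma eq_accepting_cell_coins inp c c' s z :
  (forall u y, (u < s)%N -> inp y != None -> z - s%:Z < y -> y < z + s%:Z ->
     c u y = c' u y) ->
  accepting_cell inp c s z = accepting_cell inp c' s z.
Proof. by move=> h; rewrite /accepting_cell (eq_cell_state_coins C h). Qed.

Lemma good_window inp inp' s z0 : (s <= T)%N ->
  (forall y, z0 - view_radius%:Z <= y -> y <= z0 + view_radius%:Z -> inp y = inp' y) ->
  good inp s z0 -> good inp' s z0.
Proof.
move=> hs H.
have Hacc (c : nat -> int -> bool) (z : int) : z0 - good_radius%:Z <= z -> z <= z0 + good_radius%:Z ->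
    accepting_cell inp c s z = accepting_cell inp' c s z.
  move=> h1 h2; rewrite /accepting_cell (@eq_cell_state_tape _ C inp inp' c s z) //.
  by move=> y h3 h4; apply: H; rewrite /view_radius; lia.
have Hfal (z : int) : z0 - good_radius%:Z <= z -> z <= z0 + good_radius%:Z ->
    fallible inp s z <-> fallible inp' s z.
  by move=> h1 h2; split=> [[c hc]|[c hc]]; exists c; rewrite ?(Hacc c z) // -?(Hacc c z).
move=> [hspread [c hc]]; split.
  move=> [e [he1 he2]]; apply: hspread; exists e; split => // j hj.
  by case: (he1 j hj) => h1 h2 h3; split => //; apply/Hfal.
by exists c => z h1 h2 hf; rewrite -Hacc //; apply: hc => //; exact/Hfal.
Qed.

Lemma accepting_cell_shift inp c s z a :
  accepting_cell (fun y => inp (y + a)) c s z =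
  accepting_cell inp (fun u y => c u (y - a)) s (z + a).
Proof. by rewrite /accepting_cell cell_state_shift. Qed.

Lemma fallible_shift inp s z a :
  fallible (fun y => inp (y + a)) s z <-> fallible inp s (z + a).
Proof.
split=> [[c hc]|[c hc]]; first by exists (fun u y => c u (y - a)); rewrite -accepting_cell_shift.
exists (fun u y => c u (y + a)); rewrite accepting_cell_shift.
by rewrite (@eq_accepting_cell_coins _ _ c) // => u y _ _ _ _; rewrite subrK.
Qed.

Lemma good_shift inp s z0 a : good (fun y => inp (y + a)) s z0 <-> good inp s (z0 + a).
Proof.
split=> -[hspread [c hc]]; split.
- move=> [e [he1 he2]]; apply: hspread; exists (fun j => e j - a); split.
    move=> j hj; case: (he1 j hj) => h1 h2 h3; split; try lia.
    by apply/fallible_shift; rewrite subrK.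
  by move=> j hj; have := he2 j hj; lia.
- exists (fun u y => c u (y - a)) => z h1 h2 hf.
  have := hc (z - a); rewrite accepting_cell_shift subrK; apply; try lia.
  by apply/fallible_shift; rewrite subrK.
- move=> [e [he1 he2]]; apply: hspread; exists (fun j => e j + a); split.
    move=> j hj; case: (he1 j hj) => h1 h2 h3; split; try lia.
    exact/fallible_shift.
  by move=> j hj; have := he2 j hj; lia.
- exists (fun u y => c u (y + a)) => z h1 h2 hf.
  rewrite accepting_cell_shift (@eq_accepting_cell_coins _ _ c) ?hc //; try lia.
    exact/fallible_shift.
  by move=> u y _ _ _ _; rewrite subrK.
Qed.

End GoodWindows.

Lemma spaced_seq_ge (e : nat -> int) m (d : nat) :
  (forall j, (j.+1 < m)%N -> e j + d%:Z <= e j.+1) ->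
  forall i j, (i <= j)%N -> (j < m)%N -> e i + ((j - i) * d)%N%:Z <= e j.
Proof.
move=> H i j hij; elim: j hij => [|j IH] hij hj.
  have -> : i = 0%N by lia.
  by rewrite subn0 mul0n addr0.
case: (ltnP i j.+1) => h; last first.
  have -> : i = j.+1 by lia.
  by rewrite subnn mul0n addr0.
have := IH (ltnSE h) (ltnW hj); have := H j hj.
have -> : ((j.+1 - i) * d = (j - i) * d + d)%N by rewrite subSn ?mulSn 1?addnC //; lia.
lia.
Qed.

Lemma spaced_cut (e : nat -> int) m (r s : nat) : (s <= r)%N ->
  (forall j, (j < m)%N -> 0 <= e j) ->
  (forall j, (j < m)%N -> e j + (2 * r)%N%:Z <= e j.+1) ->
  exists cut : nat,
    (forall j (y : nat), (j < m)%N -> y%:Z < e j + s%:Z -> (y < cut)%N) /\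
    (forall y : nat, e m - s%:Z < y%:Z -> (cut <= y)%N).
Proof.
case: m => [|m] hsr Hpos Hgap; first by exists 0%N.
have em_abs : Posz `|e m|%N = e m by rewrite gez0_abs // Hpos.
exists (`|e m| + r)%N; split.
  move=> j y hj hy.
  have := @spaced_seq_ge e m.+2 (2 * r) (fun j hj => Hgap j (ltnSE hj)) j m (ltnSE hj).
  move=> /(_ (ltnW (ltnSn _))); set d := ((m - j) * (2 * r))%N => hd.
  have : (0 <= d)%N by []. lia.
by move=> y hy; have := Hgap m (ltnSn _); lia.
Qed.

Lemma coins_ofE t n (w : {ffun 'I_t * 'I_n -> bool}) u k (hu : (u < t)%N) (hk : (k < n)%N) :
  coins_of w u k = w (Ordinal hu, Ordinal hk).
Proof. by rewrite /coins_of !insubT. Qed.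

Section AcceptanceCounts.
Variables (Sigma : finType) (C : PACA Sigma) (T : nat) (x : seq Sigma).

Local Notation coins t := {ffun 'I_t * 'I_(size x) -> bool}.

Definition int_coins t (w : coins t) : nat -> int -> bool :=
  fun u y => coins_of w u `|y|%N.

Lemma paca_acc_atE (coins : nat -> nat -> bool) (c : nat -> int -> bool) s :
  (forall u k, c u (Posz k) = coins u k) ->
  paca_acc_at C x coins s <->
  (forall k, (k < size x)%N -> accepting_cell C (tape x) c s (Posz k)).
Proof.
move=> Hc; case Ex: x => [|a x'].
  rewrite /paca_acc_at; split=> // _.
  by have := size_paca_conf C x coins s; rewrite Ex => /size0nil ->.
rewrite -Ex /paca_acc_at /accepting_cell; split.
  move/(all_nthP (pinput C a)) => h k hk.
  by rewrite (paca_conf_cell_state (pinput C a) Hc) //; apply: h; rewrite size_paca_conf.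
move=> h; apply/(all_nthP (pinput C a)) => k; rewrite size_paca_conf => hk.
by have := h k hk; rewrite (paca_conf_cell_state (pinput C a) Hc).
Qed.

Lemma paca_acc_at_coins t (w : coins t) s :
  paca_acc_at C x (coins_of w) s <->
  (forall z, tape x z != None -> accepting_cell C (tape x) (int_coins w) s z).
Proof.
rewrite (@paca_acc_atE _ (int_coins w)) //; split=> h z.
  by move=> /tape_neqNone [z0 zn]; have := h _ zn; rewrite gez0_abs.
by move/tape_lt_neqNone; apply: h.
Qed.

Lemma eq_accepting_cell_ffun t s z (w1 w2 : coins t) : (s <= t)%N ->
  (forall p : 'I_t * 'I_(size x), (p.1 < s)%N -> z - s%:Z < Posz p.2 ->
     Posz p.2 < z + s%:Z -> w1 p = w2 p) ->
  accepting_cell C (tape x) (int_coins w1) s z =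
  accepting_cell C (tape x) (int_coins w2) s z.
Proof.
move=> hst H; apply: eq_accepting_cell_coins => u y hu hy h1 h2.
have [y0 yn] := tape_neqNone hy; have hut : (u < t)%N by lia.
by rewrite /int_coins !(coins_ofE _ hut yn); apply: H => /=; lia.
Qed.

Lemma card_cone t s (z : int) : 0 <= z ->
  (#|[set p : 'I_t * 'I_(size x) |
      [&& (p.1 < s)%N, (z - s%:Z < Posz p.2)%R & (Posz p.2 < z + s%:Z)%R]]|
   <= s * (2 * s))%N.
Proof.
move=> z0.
apply: (@leq_trans #|setX [set u : 'I_t | (u < s)%N]
          [set k : 'I_(size x) | (z - s%:Z < Posz k) && (Posz k < z + s%:Z)]|).
  by apply: subset_leq_card; apply/subsetP => [[u k]]; rewrite !inE /= => /and3P [-> -> ->].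
rewrite cardsX leq_mul //; first by apply: (@card_ord_interval _ _ 0) => k; rewrite inE; lia.
by apply: (@card_ord_interval _ _ ((absz z).+1 - s)%N) => k; rewrite inE; lia.
Qed.

Lemma card_coins_leq_rejecting t s z : (s <= t)%N -> (s <= T)%N ->
  fallible C (tape x) s z ->
  (#|{: coins t}| <=
   #|[pred w : coins t | ~~ accepting_cell C (tape x) (int_coins w) s z]| * fail_denom T)%N.
Proof.
move=> hst hsT hf; have [z0 zn] := tape_neqNone (fallible_tape hf).
case: hf => c hc.
pose cone := [set p : 'I_t * 'I_(size x) |
  [&& (p.1 < s)%N, z - s%:Z < Posz p.2 & Posz p.2 < z + s%:Z]].
pose w0 : coins t := [ffun p => c (val p.1) (Posz (val p.2))].
apply: leq_trans (@card_ffun_leq_event _ cone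
   [pred w : coins t | ~~ accepting_cell C (tape x) (int_coins w) s z] w0 _ _) _.
- move=> w1 w2 h; rewrite /= (@eq_accepting_cell_ffun t s z w1 w2) // => p h1 h2 h3.
  by apply: h; rewrite inE h1 h2 h3.
- rewrite /= (@eq_accepting_cell_coins _ C _ _ c) // => u y hu hy h1 h2.
  have [y0 yn] := tape_neqNone hy; have hut : (u < t)%N by lia.
  by rewrite /int_coins (coins_ofE _ hut yn) ffunE /=; congr c; lia.
rewrite leq_mul2l /fail_denom leq_pexp2l ?orbT //.
by apply: leq_trans (card_cone t s z0) _; rewrite /cone_size; nia.
Qed.

Lemma card_coins_accepting_spaced t s (e : nat -> int) m : (s <= t)%N -> (s <= T)%N ->
  (forall j, (j < m)%N -> fallible C (tape x) s (e j)) ->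
  (forall j, (j.+1 < m)%N -> e j + (2 * T)%N%:Z <= e j.+1) ->
  (#|[pred w : coins t |
       all (fun j => accepting_cell C (tape x) (int_coins w) s (e j)) (iota 0 m)]|
     * fail_denom T ^ m <= (fail_denom T - 1) ^ m * #|{: coins t}|)%N.
Proof.
move=> hst hsT; elim: m => [|m IH] Hfal Hgap.
  by rewrite !expn0 mul1n muln1; apply: subset_leq_card; apply/subsetP.
set N := #|{: coins t}|; set a := fail_denom T.
pose acc j (w : coins t) := accepting_cell C (tape x) (int_coins w) s (e j).
pose P := [pred w : coins t | all (acc^~ w) (iota 0 m)].
pose Q := [pred w : coins t | acc m w].
have -> : #|[pred w : coins t | all (acc^~ w) (iota 0 m.+1)]| = #|[pred w | P w && Q w]|.
  by apply: eq_card => w; rewrite !inE -[m.+1]addn1 iotaD all_cat /= andbT.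
have IHm := IH (fun j hj => Hfal j (ltnW hj)) (fun j hj => Hgap j (ltnW hj)).
have e_ge0 j : (j < m)%N -> 0 <= e j.
  by move=> hj; case: (tape_neqNone (fallible_tape (Hfal j (ltnW hj)))).
have [cut [left_cut right_cut]] := spaced_cut hsT e_ge0 Hgap.
have Hindep : (#|[pred w | P w && Q w]| * N = #|P| * #|Q|)%N.
  apply: (@card_predI_indep _ (fun p : 'I_t * 'I_(size x) => (p.2 < cut)%N)).
    move=> w1 w2 h; apply: eq_in_all => j; rewrite mem_iota add0n => /= hj.
    by apply: eq_accepting_cell_ffun => // p h1 h2 h3; apply: h; exact: (left_cut j).
  move=> w1 w2 h; apply: eq_accepting_cell_ffun => // p h1 h2 h3; apply: h.
  by rewrite -leqNgt; apply: right_cut.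
have hQ : (#|Q| * a <= (a - 1) * N)%N.
  have := card_coins_leq_rejecting hst hsT (Hfal m (ltnSn m)).
  have : (#|Q| + #|[predC Q]| = N)%N by exact: cardC.
  rewrite -/a (@eq_card _ [predC Q] [pred w : coins t | ~~ acc m w]) //; nia.
have N_gt0 : (0 < N)%N by apply/card_gt0P; exists [ffun => false].
rewrite -(leq_pmul2r N_gt0) !expnS.
have -> : (#|[pred w | P w && Q w]| * (a * a ^ m) * N = #|P| * a ^ m * (#|Q| * a))%N.
  by rewrite -mulnA mulnCA Hindep; ring.
by apply: leq_trans (leq_mul IHm hQ) _; rewrite leq_eqVlt -/N; apply/orP; left; apply/eqP; ring.
Qed.

Definition acc_event t s := [pred w : coins t | paca_acc_at C x (coins_of w) s].

Lemma card_acc_spread t s lo hi : (s <= t)%N -> (s <= T)%N ->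
  spread C T (tape x) s lo hi -> (#|acc_event t s| * (4 * T).+1 <= #|{: coins t}|)%N.
Proof.
move=> hst hsT [e [he hgap]].
have hfal j : (j < spread_len T)%N -> fallible C (tape x) s (e j) by case/he.
set a := fail_denom T; set N := #|{: coins t}|; set M := spread_len T.
pose all_acc := [pred w : coins t |
  all (fun j => accepting_cell C (tape x) (int_coins w) s (e j)) (iota 0 M)].
have a_gt0 : (0 < a)%N by rewrite expn_gt0.
have hsub : (#|acc_event t s| <= #|all_acc|)%N.
  apply: subset_leq_card; apply/subsetP => w; rewrite !inE /= => /paca_acc_at_coins hw.
  by apply/allP => j; rewrite mem_iota => /andP [_ hj]; apply/hw/(fallible_tape (hfal j hj)).
have hcount : (#|all_acc| * a ^ M <= (a - 1) ^ M * N)%N.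
  exact: card_coins_accepting_spaced.
have hbern : ((a - 1) ^ M * (4 * T).+1 <= a ^ M)%N.
  by rewrite /M /spread_len -/a; exact: expn_pred_mul_leq.
have aM_gt0 : (0 < a ^ M)%N by rewrite expn_gt0 a_gt0.
rewrite -(leq_pmul2r aM_gt0) mulnAC.
apply: (@leq_trans (#|all_acc| * a ^ M * (4 * T).+1)).
  by rewrite !leq_mul2r hsub !orbT.
apply: (@leq_trans ((a - 1) ^ M * N * (4 * T).+1)); first by rewrite leq_mul2r hcount orbT.
by rewrite mulnAC mulnC leq_mul2l hbern orbT.
Qed.

Lemma card_acc_unsat t s lo hi :
  ~ satisfiable C (tape x) s lo hi -> #|acc_event t s| = 0%N.
Proof.
move=> hns; apply/eq_card0 => w; apply/negP; rewrite inE /= => /paca_acc_at_coins hw.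
by apply: hns; exists (int_coins w) => z _ _ /fallible_tape; apply: hw.
Qed.

Lemma card_acc_not_good t s z0 : (s <= t)%N -> (s <= T)%N ->
  ~ good C T (tape x) s z0 -> (#|acc_event t s| * (4 * T).+1 <= #|{: coins t}|)%N.
Proof.
move=> hst hsT hbad.
have [hs|hs] := classic (spread C T (tape x) s (z0 - (good_radius T)%:Z) (z0 + (good_radius T)%:Z)).
  exact: card_acc_spread hs.
have [ht|ht] := classic (satisfiable C (tape x) s (z0 - (good_radius T)%:Z) (z0 + (good_radius T)%:Z)).
  by case: hbad.
by rewrite (card_acc_unsat t ht).
Qed.

End AcceptanceCounts.

Section RejectionBound.
Variables (Sigma : finType) (C : PACA Sigma) (T : nat) (x : seq Sigma).
Hypothesis time_bound : forall coins t, paca_acc_at C x coins t ->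
  (forall s, (s < t)%N -> ~~ paca_acc_at C x coins s) -> (t < T)%N.

Local Notation coins t := {ffun 'I_t * 'I_(size x) -> bool}.

Lemma card_accept_within_leq t :
  (#|[set w : coins t | [exists s : 'I_t.+1, paca_acc_at C x (coins_of w) s]]|
   <= \sum_(s < T) #|[pred w | (s <= t)%N && (w \in acc_event C x t s)]|)%N.
Proof.
set E := [set w : coins t | _].
rewrite (@eq_card _ E [pred w | w \in E]) //.
apply: (card_leq_sum_cover (P := fun s => [pred w | (s <= t)%N && (w \in acc_event C x t s)]))
  => w; rewrite /= inE => /existsP [s1 hs1].
have exP : exists n, paca_acc_at C x (coins_of w) n by exists s1.
case: (ex_minnP exP) => s0 h0 hmin.
have hs0T : (s0 < T)%N.
  by apply: (time_bound h0) => s hs; apply/negP => /hmin; lia.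
exists s0 => //; rewrite /= inE h0 andbT.
by have := hmin _ hs1; have := ltn_ord s1; lia.
Qed.

Lemma prob_within_lt_quarter
    (not_good : forall s, (s < T)%N ->
       exists2 k : nat, (k < size x)%N & ~ good C T (tape x) s (Posz k)) t :
  paca_prob_within C x t < 1 / 4.
Proof.
rewrite /paca_prob_within; set N := #|{: coins t}|.
have hP (s : 'I_T) :
    (#|[pred w | (s <= t)%N && (w \in acc_event C x t s)]| * (4 * T).+1 <= N)%N.
  case: (leqP s t) => hst; last first.
    by rewrite (@eq_card0 _ _ _) // => w; rewrite inE /= leqNgt hst.
  have [k hk hbad] := not_good s (ltn_ord s).
  rewrite (@eq_card _ _ (acc_event C x t s)) => [|w]; last by rewrite !inE /= ?hst.
  exact: (card_acc_not_good hst (ltnW (ltn_ord s)) hbad).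
have hsum : ((\sum_(s < T) #|[pred w | (s <= t)%N && (w \in acc_event C x t s)]|)
             * (4 * T).+1 <= T * N)%N.
  rewrite big_distrl /=; apply: (@leq_trans (\sum_(s < T) N)).
    by apply: leq_sum => s _; exact: hP.
  by rewrite sum_nat_const card_ord.
have N_gt0 : (0 < N)%N by apply/card_gt0P; exists [ffun => false].
have h4 : (4 * #|[set w : coins t | [exists s : 'I_t.+1, paca_acc_at C x (coins_of w) s]]|
           < N)%N.
  have := leq_mul (card_accept_within_leq t) (leqnn (4 * T).+1); move: hsum.
  set S := (\sum_(s < T) _)%N; nia.
rewrite ltr_pdivrMr ?ltr0n //.
have : (4 * #|[set w : coins t | [exists s : 'I_t.+1, paca_acc_at C x (coins_of w) s]]|)%:R
       < N%:R :> rat by rewrite ltr_nat.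
by rewrite natrM; lra.
Qed.

End RejectionBound.

Section Gluing.
Variables (Sigma : finType) (C : PACA Sigma) (T : nat).

(* Cut the window into [spread_len T] blocks of length [4 T]: either the
   first half of some block contains no fallible cell, or picking a fallible
   cell in each first half gives a spread. *)
Lemma spread_or_gap inp s (lo : nat) :
  spread C T inp s lo (lo + good_radius T)%N \/
  exists g : nat, [/\ (lo <= g)%N, (g + 2 * T <= lo + good_radius T)%N &
    forall y, Posz g <= y -> y < Posz (g + 2 * T) -> ~ fallible C inp s y].
Proof.
set M := spread_len T.
have block_in j : (j < M)%N -> (lo + 4 * T * j + 2 * T <= lo + good_radius T)%N.
  by move=> hj; have := leq_mul (leqnn (4 * T)) hj; rewrite /good_radius -/M; nia.
have [[j [hj hgap]]|nogap] := classic (exists j, (j < M)%N /\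
    forall y, Posz (lo + 4 * T * j) <= y -> y < Posz (lo + 4 * T * j + 2 * T) ->
      ~ fallible C inp s y).
  by right; exists (lo + 4 * T * j)%N; split => //; [lia | exact: block_in].
left.
have hex j : (j < M)%N -> exists y, [/\ Posz (lo + 4 * T * j) <= y,
    y < Posz (lo + 4 * T * j + 2 * T) & fallible C inp s y].
  move=> hj; apply: NNPP => hne; apply: nogap; exists j; split => // y h1 h2 hf.
  by apply: hne; exists y.
have [e he] := nat_finite_choice 0 hex.
exists e; split.
  move=> j hj; have [h1 h2 h3] := he j hj; split => //; have := block_in j hj; lia.
by move=> j hj; have [h1 h2 _] := he j (ltnW hj); have [h3 h4 _] := he j.+1 hj; lia.
Qed.

Lemma spread_widen inp s (lo hi lo' hi' : int) : lo' <= lo -> hi <= hi' ->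
  spread C T inp s lo hi -> spread C T inp s lo' hi'.
Proof.
move=> hlo hhi [e [he hgap]]; exists e; split => // j hj.
by have [h1 h2 h3] := he j hj; split => //; lia.
Qed.

Lemma good_glue x s : (0 < T)%N -> (s <= T)%N ->
  (forall k, (k < size x)%N -> good C T (tape x) s (Posz k)) ->
  exists c, forall z, fallible C (tape x) s z -> accepting_cell C (tape x) c s z.
Proof.
move=> T_gt0 hsT Hgood.
suff : forall p, (p <= size x)%N -> exists c, forall z, 0 <= z -> z < Posz p ->
         fallible C (tape x) s z -> accepting_cell C (tape x) c s z.
  move=> /(_ (size x) (leqnn _)) [c hc]; exists c => z hf.
  have [z0 zn] := tape_neqNone (fallible_tape hf); apply: hc => //.
  by rewrite -(gez0_abs z0) ltz_nat.
elim/ltn_ind => -[_ _|k IH hk]; first by exists (fun _ _ => false) => z h1 h2; lia.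
have [hspread [c2 hc2]] := Hgood k hk.
have [hkR|hkR] := leqP k (good_radius T).
  by exists c2 => z h1 h2 hf; apply: hc2 => //; lia.
have [hs|[g [hg1 hg2 hgap]]] := spread_or_gap (tape x) s (k.+1 - good_radius T).
  have R_gt0 : (0 < good_radius T)%N.
    by rewrite /good_radius /spread_len /fail_denom !muln_gt0 expn_gt0 /=; lia.
  by case: hspread; apply: spread_widen hs; lia.
have [c1 hc1] := IH g ltac:(lia) ltac:(lia).
(* Cells left of the gap use [c1], cells right of it [c2]; the gap is wider
   than two cones of radius [T]. *)
exists (fun u y => if y < Posz (g + T) then c1 u y else c2 u y) => z h1 h2 hf.
have [hzg|hzg] := ltP z (Posz g).
  rewrite (@eq_accepting_cell_coins _ C _ _ c1) ?hc1 // => u y hu hy hy1 hy2.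
  by rewrite ifT //; lia.
have [hzg2|hzg2] := ltP z (Posz (g + 2 * T)); first by case: (hgap z).
rewrite (@eq_accepting_cell_coins _ C _ _ c2) ?hc2 //; try lia.
by move=> u y hu hy hy1 hy2; rewrite ifF //; lia.
Qed.

End Gluing.

Lemma paca_prob_within_gt0 Sigma (C : PACA Sigma) x t
    (w : {ffun 'I_t * 'I_(size x) -> bool}) :
  paca_acc_at C x (coins_of w) t -> 0 < paca_prob_within C x t.
Proof.
move=> hw; rewrite /paca_prob_within divr_gt0 // ltr0n; apply/card_gt0P; [exists w|by exists w].
by rewrite inE; apply/existsP; exists ord_max.
Qed.

Lemma accepting_run_of_good Sigma (C : PACA Sigma) T x s : (s < T)%N ->
  (forall k, (k < size x)%N -> good C T (tape x) s (Posz k)) ->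
  exists w : {ffun 'I_s * 'I_(size x) -> bool}, paca_acc_at C x (coins_of w) s.
Proof.
move=> hsT Hgood.
have [c hc] := good_glue (leq_ltn_trans (leq0n s) hsT) (ltnW hsT) Hgood.
exists [ffun p => c (val p.1) (Posz (val p.2))]; apply/paca_acc_at_coins => z hz.
rewrite (@eq_accepting_cell_coins _ C _ _ c).
  have [hf|hnf] := classic (fallible C (tape x) s z); first exact: hc.
  by apply/negPn/negP => hn; apply: hnf; exists c.
move=> u y hu hy h1 h2; have [y0 yn] := tape_neqNone hy.
by rewrite /int_coins (coins_ofE _ hu yn) ffunE /=; congr c; lia.
Qed.

Section Language.
Variables (Sigma : finType) (C : PACA Sigma) (T : nat) (L : seq Sigma -> Prop).
Hypothesis time_bound : forall x coins t, (0 < size x)%N -> paca_acc_at C x coins t ->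
  (forall s, (s < t)%N -> ~~ paca_acc_at C x coins s) -> (t < T)%N.
Hypothesis one_sided : one_sided_for C L.

Lemma mem_of_good x s : (0 < size x)%N -> (s < T)%N ->
  (forall k, (k < size x)%N -> good C T (tape x) s (Posz k)) -> L x.
Proof.
move=> hx hsT Hgood; have [w hw] := accepting_run_of_good hsT Hgood.
apply: NNPP => hL; have := (one_sided hx).2 hL s.
by have := paca_prob_within_gt0 hw; lra.
Qed.

Lemma good_of_mem x : (0 < size x)%N -> L x ->
  exists2 s, (s < T)%N & forall k, (k < size x)%N -> good C T (tape x) s (Posz k).
Proof.
move=> hx hL; apply: NNPP => hn.
have not_good s : (s < T)%N -> exists2 k : nat, (k < size x)%N & ~ good C T (tape x) s k.
  move=> hs; apply: NNPP => hk; apply: hn; exists s => // k hkx.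
  by apply: NNPP => hq; apply: hk; exists k.
have [t ht] := (one_sided hx).1 hL (1 / 4) ltac:(lra).
by have := prob_within_lt_quarter (fun coins t => @time_bound x coins t hx) not_good t; lra.
Qed.

End Language.

Section DacaOfPaca.
Variables (Sigma : finType) (C : PACA Sigma) (T : nat).

Let W := view_radius T.
Let M := (W + T)%N.

(* A state is a saturating step counter together with the part of the input
   within distance [W] of the cell; window position [o] holds cell [o - W]. *)
Definition window_state : finType :=
  ('I_M.+1 * {ffun 'I_(2 * W).+1 -> option Sigma})%type.

Definition window_input (a : Sigma) : window_state :=
  (ord0, [ffun o : 'I_(2 * W).+1 => if val o == W then Some a else None]).

Lemma window_input_inj : injective window_input.
Proof.
move=> a b [] /ffunP /(_ (inord W)); rewrite !ffunE /= inordK; last by lia.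
by rewrite eqxx => [[]].
Qed.

Definition window_rule (l : option window_state) (q : window_state)
    (r : option window_state) : window_state :=
  (inord (minn (val q.1).+1 M),
   [ffun o : 'I_(2 * W).+1 =>
      if (val o < W)%N then (if l is Some lq then lq.2 (inord o.+1) else None)
      else if (W < val o)%N then (if r is Some rq then rq.2 (inord o.-1) else None)
      else q.2 o]).

Definition window_tape (win : {ffun 'I_(2 * W).+1 -> option Sigma}) (z : int) :=
  if (- (W%:Z) <= z) && (z <= W%:Z) then win (inord (absz (z + W%:Z))) else None.

Definition window_accept (q : window_state) : bool :=
  (W <= val q.1 < W + T)%N && `[< good C T (window_tape q.2) (val q.1 - W)%N 0 >].

Definition daca_of_paca : DACA Sigma :=
  {| dQ := window_state; dinput := window_input; dinput_inj := window_input_inj;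
     ddelta := window_rule; dacc := window_accept |}.

Let q0 : window_state := (ord0, [ffun => None]).

Lemma size_daca_conf x t : size (daca_conf daca_of_paca x t) = size x.
Proof.
elim: t => [|t IH]; first by rewrite size_map.
by rewrite /daca_conf iterS size_local_step.
Qed.

Lemma daca_conf_clock x t k : (k < size x)%N ->
  val (nth q0 (daca_conf daca_of_paca x t) k).1 = minn t M.
Proof.
elim: t k => [|t IH] k hk.
  by case: x hk => // a x' hk; rewrite (nth_map a) //= minnC minn0.
rewrite /daca_conf iterS nth_local_step ?size_daca_conf //= inordK.
  by rewrite IH //; lia.
by rewrite IH //; lia.
Qed.

Lemma daca_conf_window x t k : (k < size x)%N ->
  forall o : 'I_(2 * W).+1, (`|Posz o - W%:Z| <= t)%N ->
    (nth q0 (daca_conf daca_of_paca x t) k).2 o = tape x (Posz k + Posz o - W%:Z).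
Proof.
elim: t k => [|t IH] k hk o ho.
  have oW : nat_of_ord o = W by lia.
  case: x hk => // a x' hk; rewrite (nth_map a) //= ffunE oW eqxx.
  have -> : Posz k + Posz W - W%:Z = Posz k by lia.
  by rewrite (tape_nth a).
rewrite /daca_conf iterS -/(daca_conf daca_of_paca x t) nth_local_step ?size_daca_conf //.
rewrite ffunE /=; case: (ltnP o W) => h1.
  case: k hk => [|j] hk /=; first by rewrite tape_out //; left; lia.
  by rewrite IH ?inordK; try lia; congr tape; lia.
case: (ltnP W o) => h2.
  case: ifP => h3; last by rewrite tape_out //; right; lia.
  have ho1 := ltn_ord o.
  by rewrite -subn1 IH ?inordK; try lia; congr tape; lia.
have oW : nat_of_ord o = W by apply/eqP; rewrite eqn_leq h1 h2.
by rewrite IH // oW subrr.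
Qed.

Lemma window_tape_conf x t k : (k < size x)%N -> (W <= t)%N ->
  forall y, 0 - W%:Z <= y -> y <= 0 + W%:Z ->
    window_tape (nth q0 (daca_conf daca_of_paca x t) k).2 y = tape x (y + Posz k).
Proof.
move=> hk hWt y h1 h2; rewrite /window_tape ifT; last by apply/andP; split; lia.
by rewrite daca_conf_window // inordK; try lia; congr tape; lia.
Qed.

Lemma good_conf x t k : (k < size x)%N -> (W <= t)%N -> (t < W + T)%N ->
  good C T (window_tape (nth q0 (daca_conf daca_of_paca x t) k).2) (t - W)%N 0 <->
  good C T (tape x) (t - W)%N (Posz k).
Proof.
move=> hk h1 h2; rewrite -[Posz k]add0r -good_shift.
have hs : (t - W <= T)%N by lia.
by split; apply: good_window => // y hy1 hy2; rewrite window_tape_conf.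
Qed.

Lemma daca_acc_atE x t : (0 < size x)%N ->
  daca_acc_at daca_of_paca x t <->
  [/\ (W <= t)%N, (t < W + T)%N &
      forall k, (k < size x)%N -> good C T (tape x) (t - W)%N (Posz k)].
Proof.
move=> hx; rewrite /daca_acc_at; split.
  move/(all_nthP q0) => H.
  have := H 0%N; rewrite size_daca_conf => /(_ hx) /andP [].
  rewrite daca_conf_clock // => /andP [ha hb] _.
  have h1 : (W <= t)%N by lia.
  have h2 : (t < W + T)%N by move: hb; rewrite /M; lia.
  split => // k hk; have := H k; rewrite size_daca_conf => /(_ hk) /andP [_].
  rewrite daca_conf_clock //; have -> : minn t M = t by rewrite /M; lia.
  by move/asboolP/(good_conf hk h1 h2).
move=> [h1 h2 H]; apply/(all_nthP q0) => k; rewrite size_daca_conf => hk.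
rewrite /= /window_accept daca_conf_clock //.
have -> : minn t M = t by rewrite /M; lia.
by rewrite h1 h2 /=; apply/asboolP/(good_conf hk h1 h2); exact: H.
Qed.

End DacaOfPaca.

Close Scope ring_scope.

Theorem theorem3 (Sigma : finType) (C : PACA Sigma) (L : seq Sigma -> Prop) :
  paca_const_time C -> one_sided_for C L ->
  exists C' : DACA Sigma, daca_const_time C' /\
    forall x : seq Sigma, 0 < size x -> (L x <-> daca_accepts C' x).
Proof.
move=> [T time_bound] one_sided; exists (daca_of_paca C T); split.
  exists (view_radius T + T)%N => x [hx [t ht]]; exists t; split => //.
  by have [_ ? _] := (daca_acc_atE C T t hx).1 ht.
move=> x hx; split.
  move=> hL; have [s hs Hgood] := good_of_mem time_bound one_sided hx hL.
  split => //; exists (s + view_radius T)%N; apply/(daca_acc_atE C T _ hx).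
  by rewrite addnK; split => //; lia.
move=> [_ [t ht]]; have [h1 h2 Hgood] := (daca_acc_atE C T t hx).1 ht.
by apply: (mem_of_good one_sided hx _ Hgood); lia.
Qed.
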